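(* A magma $(Q,\cdot)$ is a double Ward quasigroup (for some element of $Q$) if and only if it is cancellative and has an idempotent $e$ (i.e. $ee=e$) such that $(e\cdot xz)(ey\cdot z)=xy$ for all $x,y,z\in Q$.
   Context: A quasigroup is a magma in which $ax=b$ and $ya=b$ have unique solutions for all $a,b$. A double Ward quasigroup $(Q,\cdot,e)$ is a quasigroup with an element $e$ such that $(ee\cdot xz)(ey\cdot z)=xy$ for all $x,y,z$. A magma is cancellative if it is both left and right cancellative. *)

Definition quasigroup {Q : Type} (op : Q -> Q -> Q) : Prop :=
  (forall a b : Q, exists x, op a x = b /\ forall x', op a x' = b -> x' = x) /\
  (forall a b : Q, exists y, op y a = b /\ forall y', op y' a = b -> y' = y).

Definition double_ward_identity {Q : Type} (op : Q -> Q -> Q) (e : Q) : Prop :=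
  forall x y z : Q, op (op (op e e) (op x z)) (op (op e y) z) = op x y.

Definition double_ward_quasigroup {Q : Type} (op : Q -> Q -> Q) (e : Q) : Prop :=
  quasigroup op /\ double_ward_identity op e.

Definition left_cancellative {Q : Type} (op : Q -> Q -> Q) : Prop :=
  forall a x y : Q, op a x = op a y -> x = y.

Definition right_cancellative {Q : Type} (op : Q -> Q -> Q) : Prop :=
  forall a x y : Q, op x a = op y a -> x = y.

Definition cancellative {Q : Type} (op : Q -> Q -> Q) : Prop :=
  left_cancellative op /\ right_cancellative op.

(* In a quasigroup, uniqueness of solutions is cancellativity, and substituting
   the solutions of [e y = e] and [x e = e] into the double Ward identity forces
   [e e = e].  Conversely, for an idempotent [e] the identity with [y = z = e]
   and with [x = z = e] gives [e (x e) = x] and [(e y) e = y] by cancellation;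
   with these, the identity exhibits explicit divisions
   [a \ b = b ((a e) e)] and [b / a = e ((e b) (a e))]. *)


Section Magma.

Context {Q : Type} {op : Q -> Q -> Q}.

Lemma quasigroup_cancellative : quasigroup op -> cancellative op.
Proof.
  intros [HL HR]. split.
  - intros a x y Hxy. destruct (HL a (op a x)) as [w [_ Hw]].
    rewrite (Hw x eq_refl), (Hw y (eq_sym Hxy)). reflexivity.
  - intros a x y Hxy. destruct (HR a (op x a)) as [w [_ Hw]].
    rewrite (Hw x eq_refl), (Hw y (eq_sym Hxy)). reflexivity.
Qed.

Lemma cancellative_divisible_quasigroup :
  cancellative op ->
  (forall a b : Q, exists x, op a x = b) ->
  (forall a b : Q, exists y, op y a = b) ->
  quasigroup op.
Proof.
  intros [LC RC] ldiv rdiv. split.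
  - intros a b. destruct (ldiv a b) as [x Hx]. exists x.
    split; [exact Hx |]. intros x' Hx'. apply (LC a). congruence.
  - intros a b. destruct (rdiv a b) as [y Hy]. exists y.
    split; [exact Hy |]. intros y' Hy'. apply (RC a). congruence.
Qed.

Lemma double_ward_quasigroup_idem {e : Q} :
  double_ward_quasigroup op e -> op e e = e.
Proof.
  intros [Hq ward].
  destruct (quasigroup_cancellative Hq) as [LC _].
  destruct Hq as [HL HR].
  destruct (HL e e) as [y0 [Hy0 _]].
  destruct (HR e e) as [x0 [Hx0 _]].
  assert (Hy : op (op (op e e) e) e = e).
  { pose proof (ward e y0 y0) as H. rewrite !Hy0 in H. exact H. }
  assert (Hx : op (op (op e e) e) (op (op e e) e) = e).
  { pose proof (ward x0 e e) as H. rewrite Hx0 in H. exact H. }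
  assert (Hee_e : op (op e e) e = e).
  { symmetry. apply (LC (op (op e e) e)). congruence. }
  rewrite Hee_e in Hy. exact Hy.
Qed.

Section IdempotentWard.

Context {e : Q}.
Hypothesis LC : left_cancellative op.
Hypothesis RC : right_cancellative op.
Hypothesis Hee : op e e = e.
Hypothesis ward :
  forall x y z : Q, op (op e (op x z)) (op (op e y) z) = op x y.

Lemma ward_e_xe (x : Q) : op e (op x e) = x.
Proof.
  apply (RC e). pose proof (ward x e e) as H. rewrite !Hee in H. exact H.
Qed.

Lemma ward_ey_e (y : Q) : op (op e y) e = y.
Proof.
  apply (LC e). pose proof (ward e y e) as H. rewrite !Hee in H. exact H.
Qed.

Lemma ward_left_division (a b : Q) : op a (op b (op (op a e) e)) = b.
Proof.
  pose proof (ward e (op b e) (op (op a e) e)) as H.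
  rewrite !ward_e_xe in H. exact H.
Qed.

Lemma ward_right_division (a b : Q) : op (op e (op (op e b) (op a e))) a = b.
Proof.
  pose proof (ward (op e b) e (op a e)) as H.
  rewrite Hee, ward_e_xe, ward_ey_e in H. exact H.
Qed.

Lemma idem_ward_quasigroup : quasigroup op.
Proof.
  apply cancellative_divisible_quasigroup; [split; assumption | |].
  - intros a b. eexists. apply ward_left_division.
  - intros a b. eexists. apply ward_right_division.
Qed.

End IdempotentWard.

End Magma.

Theorem corollary4p12 (Q : Type) (op : Q -> Q -> Q) :
  (exists e : Q, double_ward_quasigroup op e) <->
  (cancellative op /\
   exists e : Q, op e e = e /\
     forall x y z : Q, op (op e (op x z)) (op (op e y) z) = op x y).
Proof.
  split.
  - intros [e Hdw].
    pose proof (double_ward_quasigroup_idem Hdw) as Hee.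
    destruct Hdw as [Hq ward].
    split; [exact (quasigroup_cancellative Hq) |].
    exists e. split; [exact Hee |].
    intros x y z. pose proof (ward x y z) as H. rewrite Hee in H. exact H.
  - intros [[LC RC] [e [Hee ward]]].
    exists e. split.
    + exact (idem_ward_quasigroup LC RC Hee ward).
    + intros x y z. rewrite Hee. apply ward.
Qed.
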